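(* Let $H$ be a finite dimensional hereditary algebra over a field, and let $M$ and $X$ be finitely generated $H$-modules with $\operatorname{Ext}^1_H(M,M)=0$. Then $\operatorname{Hom}_H(\operatorname{rej}_M X, M)=0$.
   Context: For $H$-modules $M$ and $X$, the reject of $M$ in $X$ is the submodule $\operatorname{rej}_M X=\bigcap_{f\colon X\to M}\operatorname{Ker} f$ of $X$, the intersection over all $H$-homomorphisms $f\colon X\to M$. *)

From HB Require Import structures.
From mathcomp Require Import all_boot all_algebra all_field.
Set Implicit Arguments. Unset Strict Implicit. Unset Printing Implicit Defensive.
Import GRing.Theory.
Local Open Scope ring_scope.

(* A finite-dimensional algebra over a field F is [H : falgType F].
   (Left) H-modules are [lmodType H]; H-homomorphisms are [{linear U -> V}]. *)

Section ModDefs.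
Variables (F : fieldType) (H : falgType F).

Definition fin_gen (X : lmodType H) : Prop :=
  exists s : seq X, forall x : X,
    exists c : 'I_(size s) -> H, x = \sum_(i < size s) c i *: s`_i.

Definition projective (P : lmodType H) : Prop :=
  forall (A B : lmodType H) (p : {linear A -> B}) (f : {linear P -> B}),
    (forall b : B, exists a : A, p a = b) -> exists g : {linear P -> A}, forall x, p (g x) = f x.

Definition hereditary : Prop :=
  forall (P S : lmodType H) (i : {linear S -> P}),
    injective i -> projective P -> projective S.

Definition short_exact (N E M : lmodType H)
  (i : {linear N -> E}) (p : {linear E -> M}) : Prop :=
  [/\ injective i, (forall m : M, exists e : E, p e = m) & forall e, p e = 0 <-> exists n, e = i n].

(* Ext^1_H(M, N) = 0 : every extension of M by N splits (Yoneda Ext^1) *)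
Definition Ext1_zero (M N : lmodType H) : Prop :=
  forall (E : lmodType H) (i : {linear N -> E}) (p : {linear E -> M}),
    short_exact i p -> exists s : {linear M -> E}, forall m, p (s m) = m.

Definition in_rej (M X : lmodType H) (x : X) : Prop :=
  forall f : {linear X -> M}, f x = 0.

End ModDefs.

(* Since X is finite dimensional over the base field, rej_M X is already the
   common kernel of finitely many maps f_1, ..., f_n : X -> M.  Pull everything
   back along a free cover H^k -> X; it then suffices to extend a map defined on
   the common kernel of the f_i to all of H^k, which is done one kernel at a time:
   for Y projective and f : Y -> M, every map on ker f extends to Y.  When f is
   onto, pushing ker f -> Y -> M out along the given map yields an extension of
   M by M; it splits because Ext^1(M, M) = 0, and a splitting gives the desired
   map on Y.  In general, let Q be the preimage of f(Y) in a free cover of M: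
   Q is projective because H is hereditary, so Y and Q lift to each other over
   f(Y), which transports the problem to the surjective case.  The extended map
   H^k -> M kills the kernel of the cover, so it descends to a map X -> M, which
   vanishes on rej_M X. *)

From HB Require Import structures.
From mathcomp Require Import all_boot all_algebra all_field boolp.
Set Implicit Arguments. Unset Strict Implicit. Unset Printing Implicit Defensive.
Import GRing.Theory.
Local Open Scope ring_scope.
Local Open Scope quotient_scope.

Definition linear_on (R : pzRingType) (U V : lmodType R) (S : {pred U}) (h : U -> V) :=
  forall a, {in S &, forall u v, h (a *: u + v) = a *: h u + h v}.

Definition pack_linear (R : pzRingType) (U V : lmodType R) (f : U -> V) (fL : linear f)
    : {linear U -> V} :=
  HB.pack f (GRing.isLinear.Build R U V *:%R f fL).

Lemma linear_on0 (R : pzRingType) (U V : lmodType R) (S : submodClosed U) (h : U -> V) :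
  linear_on S h -> h 0 = 0.
Proof.
move=> hL; have := hL 1 0 0 (rpred0 S) (rpred0 S).
by rewrite !scale1r addr0 => /(congr1 (fun x => x - h 0)); rewrite addrK subrr.
Qed.

Section Submodule.
Variables (R : pzRingType) (V : lmodType R) (S : submodClosed V).

Inductive submod_of : predArgType := Submod v of v \in S.
Definition submod_val (u : submod_of) : V := let: Submod v _ := u in v.
HB.instance Definition _ := [isSub of submod_of for submod_val].
HB.instance Definition _ := [Choice of submod_of by <:].
HB.instance Definition _ := [SubChoice_isSubLmodule of submod_of by <:].

Fact submod_val_is_linear : linear submod_val. Proof. by []. Qed.
HB.instance Definition _ := GRing.isSemilinear.Build R submod_of V _ submod_val
  (GRing.semilinear_linear submod_val_is_linear).

Lemma insubd_linear_on : linear_on S (insubd (0 : submod_of)).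
Proof.
move=> a u v uS vS; apply: val_inj.
by rewrite /= !insubdK // rpredD ?rpredZ.
Qed.

End Submodule.

Section Corestriction.
Variables (R : pzRingType) (U V : lmodType R) (S : submodClosed V).
Variables (f : {linear U -> V}) (fS : forall u, f u \in S).

Definition corestr (u : U) : submod_of S := Submod (fS u).

Fact corestr_is_linear : linear corestr.
Proof. by move=> a u v; apply: val_inj; rewrite /= linearP. Qed.
HB.instance Definition _ := GRing.isSemilinear.Build R U (submod_of S) _ corestr
  (GRing.semilinear_linear corestr_is_linear).

End Corestriction.

Section LinearPredicates.
Variables (R : pzRingType) (U V : lmodType R).

Definition lker_pred (f : {linear U -> V}) : {pred U} := [pred u | f u == 0].

Definition common_ker (fs : seq {linear U -> V}) : {pred U} :=
  [pred u | all (fun f => u \in lker_pred f) fs].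

Definition limg_pred (f : {linear U -> V}) : {pred V} := [pred v | `[< exists u, f u = v >]].

Definition lpreim_pred (f : {linear U -> V}) (S : {pred V}) : {pred U} := [pred u | f u \in S].

Fact lker_pred_closed f : GRing.submod_closed (lker_pred f).
Proof.
split=> [|a u v]; rewrite !inE ?linear0 // linearP.
by move=> /eqP-> /eqP->; rewrite scaler0 addr0.
Qed.
HB.instance Definition _ f := GRing.isSubmodClosed.Build R U (lker_pred f)
  (lker_pred_closed f).

Lemma common_ker_cons f fs u :
  (u \in common_ker (f :: fs)) = (f u == 0) && (u \in common_ker fs).
Proof. by []. Qed.

Fact common_ker_closed fs : GRing.submod_closed (common_ker fs).
Proof.
split=> [|a u v]; rewrite !inE; elim: fs => //= f fs IH.
  by rewrite inE linear0 eqxx.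
rewrite !inE => /andP[/eqP fu uK] /andP[/eqP fv vK].
by rewrite linearP fu fv scaler0 addr0 eqxx IH.
Qed.
HB.instance Definition _ fs := GRing.isSubmodClosed.Build R U (common_ker fs)
  (common_ker_closed fs).

Fact limg_pred_closed f : GRing.submod_closed (limg_pred f).
Proof.
split=> [|a _ _ /asboolP[u <-] /asboolP[v <-]]; apply/asboolP.
  by exists 0; rewrite linear0.
by exists (a *: u + v); rewrite linearP.
Qed.
HB.instance Definition _ f := GRing.isSubmodClosed.Build R V (limg_pred f)
  (limg_pred_closed f).

Fact lpreim_pred_closed f (S : submodClosed V) : GRing.submod_closed (lpreim_pred f S).
Proof.
split=> [|a u v]; rewrite !inE ?linear0 ?rpred0 // linearP.
by move=> uS vS; rewrite rpredD ?rpredZ.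
Qed.
HB.instance Definition _ f (S : submodClosed V) :=
  GRing.isSubmodClosed.Build R U (lpreim_pred f S) (lpreim_pred_closed f S).

End LinearPredicates.

Lemma common_ker_comp (R : pzRingType) (U V W : lmodType R) (pi : {linear W -> U})
    (fs : seq {linear U -> V}) w :
  (w \in common_ker [seq (f \o pi : {linear W -> V}) | f : {linear U -> V} <- fs])
    = (pi w \in common_ker fs).
Proof. by elim: fs => //= f fs IH; rewrite !common_ker_cons IH. Qed.

Section QuotientModule.
Variables (R : pzRingType) (V : lmodType R) (S : zmodClosed V).
Hypothesis SZ : GRing.scaler_closed S.

(* Indexing the quotient by the closure proof lets the module structure below be
   found by canonical structure inference. *)
Definition quotmod of GRing.scaler_closed S := Quotient.quot S.
Local Notation Q := (quotmod SZ).
HB.instance Definition _ := Choice.on Q.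
HB.instance Definition _ := EqQuotient.on Q.
HB.instance Definition _ := GRing.Zmodule.on Q.
HB.instance Definition _ := ZmodQuotient.on Q.

Definition qscale (a : R) := lift_op1 Q ( *:%R a).

Lemma pi_scale a : {morph \pi_Q : x / a *: x >-> qscale a x}.
Proof.
move=> x; unlock qscale; apply/eqP; rewrite piE Quotient.equivE -scalerBr.
by rewrite SZ // Quotient.idealrBE reprK.
Qed.
Canonical pi_scale_morph a := PiMorph1 (pi_scale a).

Fact qscaleA a b (x : Q) : qscale a (qscale b x) = qscale (a * b) x.
Proof. by rewrite -[x]reprK !piE scalerA. Qed.
Fact qscale1 : left_id 1 qscale.
Proof. by move=> x; rewrite -[x]reprK !piE scale1r. Qed.
Fact qscaleDr : right_distributive qscale +%R.
Proof. by move=> a x y; rewrite -[x]reprK -[y]reprK !piE scalerDr. Qed.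
Fact qscaleDl (x : Q) : {morph qscale^~ x : a b / a + b}.
Proof. by move=> a b; rewrite -[x]reprK !piE scalerDl. Qed.
HB.instance Definition _ := GRing.Zmodule_isLmodule.Build R Q
  qscaleA qscale1 qscaleDr qscaleDl.

HB.instance Definition _ :=
  GRing.isScalable.Build R V Q *:%R \pi_Q pi_scale.

Lemma eqquotmodP (x y : V) : reflect (x - y \in S) (x == y %[mod Q]).
Proof. by rewrite piE; apply: idP. Qed.

End QuotientModule.

Section Projective.
Variables (F : fieldType) (H : falgType F).

Lemma projective_submod (Y : lmodType H) (S : submodClosed Y) :
  hereditary H -> projective Y -> projective (submod_of S).
Proof. by move=> Hh; apply: (Hh _ _ (@submod_val _ _ S)); apply: val_inj. Qed.

Section RowCombination.
Variables (k : nat) (A : lmodType H) (a : 'I_k -> A).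

Definition rowcomb (u : 'rV[H]_k) : A := \sum_j u 0 j *: a j.

Fact rowcomb_is_linear : linear rowcomb.
Proof.
move=> c u v; rewrite /rowcomb scaler_sumr -big_split; apply: eq_bigr => j _.
by rewrite !mxE scalerDl scalerA.
Qed.
HB.instance Definition _ := GRing.isSemilinear.Build H 'rV[H]_k A _ rowcomb
  (GRing.semilinear_linear rowcomb_is_linear).

End RowCombination.

Lemma rowcomb_basis k (A : lmodType H) (f : {linear 'rV[H]_k -> A}) u :
  rowcomb (fun j => f (delta_mx 0 j)) u = f u.
Proof.
rewrite [in RHS](row_sum_delta u) linear_sum; apply: eq_bigr => j _.
by rewrite linearZ.
Qed.

Lemma projective_rV k : projective 'rV[H]_k.
Proof.
move=> A B p f p_onto.
have [b pb] := choice (fun j : 'I_k => p_onto (f (delta_mx 0 j))).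
exists (rowcomb b) => u; rewrite -[RHS]rowcomb_basis /= /rowcomb linear_sum.
by apply: eq_bigr => j _; rewrite linearZ pb.
Qed.

Lemma fin_gen_cover (X : lmodType H) :
  fin_gen X -> exists k (pi : {linear 'rV[H]_k -> X}), forall x, exists u, pi u = x.
Proof.
case=> s s_spans; exists (size s), (rowcomb (fun j => s`_j)) => x.
have [c ->] := s_spans x; exists (\row_j c j); rewrite /= /rowcomb.
by apply: eq_bigr => j _; rewrite /= mxE.
Qed.

End Projective.

Section Pushout.
Variables (F : fieldType) (H : falgType F) (M P : lmodType H).
Variables (p : {linear P -> M}) (h : P -> M).
Hypotheses (p_onto : forall m, exists y, p y = m) (hL : linear_on (lker_pred p) h).

(* M * P modulo these relations is the pushout of h and the inclusion of ker p. *)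
Definition pushout_rel : {pred M * P} := [pred w | (p w.2 == 0) && (w.1 == - h w.2)].

Fact pushout_rel_closed : GRing.submod_closed pushout_rel.
Proof.
split=> [|a u v]; rewrite !inE /= ?linear0 ?(linear_on0 hL) ?oppr0 ?eqxx //.
move=> /andP[/eqP pu /eqP->] /andP[/eqP pv /eqP->].
by rewrite linearP pu pv scaler0 addr0 eqxx hL ?inE ?pu ?pv //= opprD scalerN.
Qed.
HB.instance Definition _ := GRing.isSubmodClosed.Build H (M * P)%type pushout_rel
  pushout_rel_closed.

Fact pushout_rel_scaler_closed : GRing.scaler_closed pushout_rel.
Proof. by move=> a w; apply: rpredZ. Qed.

Definition pushout := quotmod pushout_rel_scaler_closed.

Definition push_inl (m : M) : pushout := \pi_pushout (m, 0).
Definition push_inr (y : P) : pushout := \pi_pushout (0, y).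
Definition push_proj (e : pushout) : M := p (repr e).2.

Fact push_inl_is_linear : linear push_inl.
Proof.
move=> a m n; rewrite /push_inl -linearP; congr \pi_pushout.
by apply: injective_projections; rewrite /= ?scaler0 ?addr0.
Qed.
HB.instance Definition _ := GRing.isSemilinear.Build H M pushout _ push_inl
  (GRing.semilinear_linear push_inl_is_linear).

Fact push_inr_is_linear : linear push_inr.
Proof.
move=> a y z; rewrite /push_inr -linearP; congr \pi_pushout.
by apply: injective_projections; rewrite /= ?scaler0 ?addr0.
Qed.
HB.instance Definition _ := GRing.isSemilinear.Build H P pushout _ push_inr
  (GRing.semilinear_linear push_inr_is_linear).

Lemma push_projE w : push_proj (\pi_pushout w) = p w.2.
Proof.
have /eqquotmodP : repr (\pi_pushout w) == w %[mod pushout] by rewrite reprK.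
by rewrite inE /= linearB subr_eq0 => /andP[/eqP].
Qed.

Fact push_proj_is_linear : linear push_proj.
Proof.
move=> a; elim/quotW=> v; elim/quotW=> w.
by rewrite -linearP !push_projE linearP.
Qed.
HB.instance Definition _ := GRing.isSemilinear.Build H pushout M _ push_proj
  (GRing.semilinear_linear push_proj_is_linear).

Lemma push_inr_ker y : y \in lker_pred p -> push_inr y = push_inl (h y).
Proof.
rewrite inE => /eqP py; apply/eqP/eqquotmodP.
by rewrite inE !raddfB /= py linear0 !subr0 sub0r !eqxx.
Qed.

Lemma push_proj_ker (e : pushout) : push_proj e = 0 <-> exists m, e = push_inl m.
Proof.
elim/quotW: e => w; rewrite push_projE; split=> [pw|[m /(congr1 push_proj)]].
  exists (w.1 + h w.2); apply/eqP/eqquotmodP.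
  by rewrite inE !raddfB /= pw linear0 !subr0 opprD addrA subrr sub0r !eqxx.
by rewrite !push_projE linear0.
Qed.

Lemma pushout_short_exact : short_exact push_inl push_proj.
Proof.
split=> [m n /eqP/eqquotmodP|m|e]; last exact: push_proj_ker.
  by rewrite inE !raddfB /= !subrr (linear_on0 hL) oppr0 eqxx subr_eq0 => /eqP.
by have [y <-] := p_onto m; exists (push_inr y); apply: push_projE.
Qed.

Lemma ext1_extend : Ext1_zero M M -> exists G : {linear P -> M}, {in lker_pred p, G =1 h}.
Proof.
move=> Ext; have [s sK] := Ext _ _ _ pushout_short_exact.
have [inl_inj _ inl_img] := pushout_short_exact.
have retract y : exists m, push_inr y - s (p y) = push_inl m.
  by apply/inl_img; rewrite linearB /= sK push_projE subrr.
have [G GE] := choice retract.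
have G_linear : linear G.
  move=> a y z; apply: inl_inj.
  rewrite /= linearP /= -!GE [push_inr _]linearP [p _]linearP [s _]linearP /=.
  by rewrite scalerBr addrACA opprD.
exists (pack_linear G_linear) => y ker_y; apply: inl_inj.
by rewrite /= -GE -push_inr_ker // (eqP ker_y) linear0 subr0.
Qed.

End Pushout.

Section Extension.
Variables (F : fieldType) (H : falgType F) (M : lmodType H).
Hypotheses (Hh : hereditary H) (fgM : fin_gen M) (Ext : Ext1_zero M M).

Lemma extend_from_kernel (Y : lmodType H) (th : {linear Y -> M}) (h : Y -> M) :
  projective Y -> linear_on (lker_pred th) h ->
  exists G : {linear Y -> M}, {in lker_pred th, G =1 h}.
Proof.
move=> Yproj hL; have [k [p p_onto]] := fin_gen_cover fgM.
pose N := limg_pred th; pose Q := lpreim_pred p N.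
have Qproj : projective (submod_of Q) := projective_submod Hh (projective_rV (k := k)).
have thN y : th y \in N by apply/asboolP; exists y.
have pN (z : submod_of Q) : (p \o val) z \in N := valP z.
have th2_onto (n : submod_of N) : exists y, corestr thN y = n.
  by have /asboolP[y thy] := valP n; exists y; apply: val_inj.
have p2_onto (n : submod_of N) : exists z, corestr pN z = n.
  have [z pz] := p_onto (val n); have Qz : z \in Q by rewrite inE pz; apply: valP.
  by exists (Submod Qz); apply: val_inj.
have [al alE] := Yproj _ _ _ (corestr thN) p2_onto.
have [be beE] := Qproj _ _ _ (corestr pN) th2_onto.
have p_al y : p (val (al y)) = th y by have := congr1 val (alE y).
have th_be z : th (be z) = p (val z) by have := congr1 val (beE z).
have kerQ z : z \in lker_pred p -> z \in Q by move=> zK; rewrite inE (eqP zK) rpred0.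
have be_ker z : z \in lker_pred p -> be (insubd 0 z) \in lker_pred th.
  by move=> zK; rewrite inE th_be insubdK ?kerQ.
have h'L : linear_on (lker_pred p) (fun z => h (be (insubd 0 z))).
  by move=> a u v uK vK; rewrite insubd_linear_on ?kerQ // linearP hL ?be_ker.
have [G' G'E] := ext1_extend p_onto h'L Ext.
have diff_ker y : y - be (al y) \in lker_pred th by rewrite inE linearB th_be p_al subrr.
pose G y := G' (val (al y)) + h (y - be (al y)).
have G_linear : linear G.
  move=> a y z; rewrite /G.
  have -> : a *: y + z - be (al (a *: y + z)) = a *: (y - be (al y)) + (z - be (al z)).
    by rewrite !linearP scalerN scalerBr addrACA.
  by rewrite hL // !linearP /= scalerDr addrACA.
exists (pack_linear G_linear) => y yK.
have al_ker : val (al y) \in lker_pred p by rewrite inE p_al (eqP yK).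
have := hL 1 _ _ (be_ker _ al_ker) (diff_ker y).
by rewrite /= /G G'E // !valKd !scale1r [_ + (y - _)]addrC subrK => <-.
Qed.

Lemma extend_from_common_ker (Y : lmodType H) (fs : seq {linear Y -> M}) (h : Y -> M) :
  projective Y -> linear_on (common_ker fs) h ->
  exists G : {linear Y -> M}, {in common_ker fs, G =1 h}.
Proof.
move=> Yproj; elim: fs h => [|f fs IH] h hL.
  by exists (pack_linear (fun a u v => hL a u v isT isT)).
pose th := f \o @submod_val _ _ (common_ker fs).
have hthL : linear_on (lker_pred th) (h \o val).
  by move=> a u v uK vK; rewrite /= hL // common_ker_cons; apply/andP; split=> //;
    apply: valP.
have [G1 G1E] := extend_from_kernel (projective_submod Hh Yproj) hthL.
have h1L : linear_on (common_ker fs) (G1 \o insubd 0).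
  by move=> a u v uK vK; rewrite /= insubd_linear_on // linearP.
have [G GE] := IH _ h1L; exists G => y; rewrite common_ker_cons => /andP[fy yK].
have vy : val (insubd 0 y : submod_of (common_ker fs)) = y by rewrite insubdK.
rewrite -vy in fy; rewrite GE //= G1E //=; congr h; exact: vy.
Qed.

End Extension.

Lemma linear_descend (R : pzRingType) (U V W : lmodType R)
    (pi : {linear U -> V}) (G : {linear U -> W}) :
  (forall v, exists u, pi u = v) -> {in lker_pred pi, forall u, G u = 0} ->
  exists G' : {linear V -> W}, forall u, G' (pi u) = G u.
Proof.
move=> pi_onto Gker; have [sec secK] := choice pi_onto.
have G_sec u : G (sec (pi u)) = G u.
  by apply/eqP; rewrite -subr_eq0 -linearB Gker // inE linearB secK subrr.
have G'_linear : linear (G \o sec).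
  move=> a v w /=; have -> : a *: v + w = pi (a *: sec v + sec w) by rewrite linearP !secK.
  by rewrite G_sec linearP.
by exists (pack_linear G'_linear) => u; apply: G_sec.
Qed.

Lemma vspace_of_closed (K : fieldType) (V : vectType K) (S : {pred V}) :
  GRing.submod_closed S -> exists U : {vspace V}, U =i S.
Proof.
move=> [S0 SL].
pose inner d := `[< exists U : {vspace V}, {subset U <= S} /\ \dim U = d >].
have inner0 : exists d, inner d.
  by exists 0; apply/asboolP; exists 0%VS; split; [move=> v /[!memv0]/eqP-> | rewrite dimv0].
have inner_bounded d : inner d -> (d <= \dim {:V})%N.
  by case/asboolP=> U [_ <-]; apply/dimvS/subvf.
case: (ex_maxnP inner0 inner_bounded) => d /asboolP[U [US dimU]] maxd.
exists U => v; apply/idP/idP=> [/US // | vS]; apply/negPn/negP => vU.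
have UvS : {subset (U + <[v]>)%VS <= S}.
  move=> _ /memv_addP[u uU [_ /vlineP[c ->] ->]].
  by rewrite addrC SL // US.
have dimUv : (\dim U < \dim (U + <[v]>))%N.
  by rewrite (ltn_leqif (dimv_leqif_sup (addvSl U <[v]>))) subv_add subvv.
have /maxd : inner (\dim (U + <[v]>)) by apply/asboolP; exists (U + <[v]>)%VS.
by rewrite -dimU leqNgt dimUv.
Qed.

Section Reject.
Variables (F : fieldType) (H : falgType F) (M X : lmodType H).

Lemma in_rej_common_ker (fs : seq {linear X -> M}) x : in_rej M x -> x \in common_ker fs.
Proof. by move=> x_rej; elim: fs => //= f fs IH; rewrite common_ker_cons x_rej eqxx. Qed.

Lemma rej_common_ker :
  fin_gen X -> exists fs : seq {linear X -> M}, forall x, x \in common_ker fs -> in_rej M x.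
Proof.
case=> s s_spans; pose V := {ffun 'I_(size s) -> H}.
pose comb (v : V) : X := \sum_j v j *: s`_j.
have combP c (v w : V) : comb (c *: v + w) = c%:A *: comb v + comb w.
  rewrite /comb scaler_sumr -big_split; apply: eq_bigr => j _ /=.
  by rewrite !ffunE scalerDl scalerA mulr_algl.
have comb_onto x : exists v, comb v = x.
  have [c ->] := s_spans x; exists [ffun j => c j].
  by apply: eq_bigr => j _; rewrite ffunE.
pose pre (fs : seq {linear X -> M}) : {pred V} := [pred v | comb v \in common_ker fs].
have preE fs v : (v \in pre fs) = (comb v \in common_ker fs) by [].
have pre_closed fs : GRing.submod_closed (pre fs).
  split=> [|c v w]; rewrite !preE; last by rewrite combP => ? ?; rewrite rpredD ?rpredZ.
  by rewrite /comb big1 ?rpred0 // => j _; rewrite ffunE scale0r.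
(* A family whose common kernel has least dimension cannot be refined by any f. *)
pose minimal d := `[< exists fs (U : {vspace V}), U =i pre fs /\ \dim U = d >].
have minimal_ex : exists d, minimal d.
  have [U UE] := vspace_of_closed (pre_closed [::]).
  by exists (\dim U); apply/asboolP; exists [::], U.
case: (ex_minnP minimal_ex) => d /asboolP[fs [U [UE dimU]]] mind.
exists fs => x x_ker f; have [v vx] := comb_onto x.
have [U' U'E] := vspace_of_closed (pre_closed (f :: fs)).
have U'U : (U' <= U)%VS.
  by apply/subvP => w; rewrite U'E UE !preE common_ker_cons => /andP[].
have /eqP U'eq : U' == U.
  rewrite eqEdim U'U dimU; apply: mind; apply/asboolP; by exists (f :: fs), U'.
have : v \in U' by rewrite U'eq UE preE vx.
by rewrite U'E preE common_ker_cons vx => /andP[/eqP].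
Qed.

End Reject.

Theorem lemma2p3 (F : fieldType) (H : falgType F) (M X : lmodType H) :
  hereditary H -> fin_gen M -> fin_gen X -> Ext1_zero M M ->
  forall g : X -> M,
    (forall (a : H) (x y : X), in_rej M x -> in_rej M y ->
        g (a *: x + y) = a *: g x + g y) ->
    forall x : X, in_rej M x -> g x = 0.
Proof.
move=> Hh fgM fgX Ext g gL x x_rej.
have [fs fs_rej] := rej_common_ker M fgX.
have [k [pi pi_onto]] := fin_gen_cover fgX.
pose fs' := [seq (f \o pi : {linear _ -> M}) | f : {linear X -> M} <- fs].
have gpiL : linear_on (common_ker fs') (g \o pi).
  by move=> a u v; rewrite !common_ker_comp => uK vK; rewrite /= linearP gL //; apply: fs_rej.
have g0 : g 0 = 0 by have := linear_on0 gpiL; rewrite /= linear0.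
have [G GE] := extend_from_common_ker Hh fgM Ext (projective_rV (k := k)) gpiL.
have [G' G'E] : exists G' : {linear X -> M}, forall u, G' (pi u) = G u.
  apply: linear_descend => // u /eqP piu.
  by rewrite GE ?common_ker_comp /= piu ?g0 ?rpred0.
have [u ux] := pi_onto x; subst x.
rewrite -[g _]/((g \o pi) u) -GE ?common_ker_comp ?in_rej_common_ker // -G'E.
exact: x_rej.
Qed.
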